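(* For all $v,w\in(-1,+\infty)$, $$(\ln(1+v))^2+(\ln(1+w))^2\ge\frac12\Big(\ln\big(1+\sqrt{v^2+w^2}\big)\Big)^2.$$ *)

From Stdlib Require Import Reals.

From Stdlib Require Import Reals Lra Psatz.
From Coquelicot Require Import Rcomplements.
Open Scope R_scope.

(* Since [1 + |x| <= 1 / (1 + x)] for [-1 < x <= 0], replacing [x] by [|x|] can
   only decrease [|ln (1 + x)|].  Together with
   [sqrt (v^2 + w^2) <= |v| + |w|] and the subadditivity of [ln (1 + .)] on
   [[0, +oo)], this gives [ln (1 + sqrt (v^2 + w^2)) <= |ln (1 + v)| + |ln (1 + w)|],
   and squaring with [(a + b)^2 <= 2 (a^2 + b^2)] concludes. *)

Lemma ln_1_plus_ge0 (x : R) : 0 <= x -> 0 <= ln (1 + x).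
Proof. intros hx. rewrite <- ln_1. apply ln_le; lra. Qed.

Lemma ln_1_plus_abs_le (x : R) : -1 < x -> ln (1 + Rabs x) <= Rabs (ln (1 + x)).
Proof.
  intros hx. destruct (Rle_or_lt 0 x) as [hx0 | hx0].
  - rewrite (Rabs_pos_eq x hx0). apply RRle_abs.
  - rewrite (Rabs_left x hx0), <- Rabs_Ropp, <- ln_Rinv by lra.
    apply Rle_trans with (ln (/ (1 + x))); [| apply RRle_abs].
    apply ln_le; [lra |].
    apply Rmult_le_reg_r with (1 + x); [lra |].
    rewrite Rinv_l by lra. nra.
Qed.

Lemma ln_1_plus_subadditive (a b : R) :
  0 <= a -> 0 <= b -> ln (1 + (a + b)) <= ln (1 + a) + ln (1 + b).
Proof.
  intros ha hb. rewrite <- ln_mult by lra. apply ln_le; nra.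
Qed.

Lemma sqrt_sum_sqr_le_abs (x y : R) : sqrt (x ^ 2 + y ^ 2) <= Rabs x + Rabs y.
Proof.
  pose proof (Rabs_pos x). pose proof (Rabs_pos y).
  rewrite <- (sqrt_pow2 (Rabs x + Rabs y)) by lra.
  apply sqrt_le_1_alt. rewrite <- (pow2_abs x), <- (pow2_abs y). nra.
Qed.

Lemma ln_1_plus_sqrt_sum_sqr_le (v w : R) : -1 < v -> -1 < w ->
  ln (1 + sqrt (v ^ 2 + w ^ 2)) <= Rabs (ln (1 + v)) + Rabs (ln (1 + w)).
Proof.
  intros hv hw. pose proof (Rabs_pos v). pose proof (Rabs_pos w).
  apply Rle_trans with (ln (1 + (Rabs v + Rabs w))).
  { apply ln_le.
    - pose proof (sqrt_pos (v ^ 2 + w ^ 2)). lra.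
    - pose proof (sqrt_sum_sqr_le_abs v w). lra. }
  apply Rle_trans with (ln (1 + Rabs v) + ln (1 + Rabs w)).
  - apply ln_1_plus_subadditive; assumption.
  - apply Rplus_le_compat; apply ln_1_plus_abs_le; assumption.
Qed.

Theorem lemmaA1 (v w : R) (hv : -1 < v) (hw : -1 < w) :
  (ln (1 + v))^2 + (ln (1 + w))^2 >= / 2 * (ln (1 + sqrt (v^2 + w^2)))^2.
Proof.
  rewrite <- (pow2_abs (ln (1 + v))), <- (pow2_abs (ln (1 + w))).
  pose proof (ln_1_plus_sqrt_sum_sqr_le v w hv hw) as hle.
  pose proof (ln_1_plus_ge0 _ (sqrt_pos (v ^ 2 + w ^ 2))) as hge0.
  set (L := ln (1 + sqrt (v ^ 2 + w ^ 2))) in *.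
  set (a := Rabs (ln (1 + v))) in *. set (b := Rabs (ln (1 + w))) in *.
  assert (hsq : L ^ 2 <= (a + b) ^ 2) by (apply pow_incr; lra).
  pose proof (pow2_ge_0 (a - b)). nra.
Qed.
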